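(* Let $G=G_1\ast\cdots\ast G_m\ast F_N$ be a countable group ($F_N$ free of finite rank), $\mathcal{F}=\{[G_1],\dots,[G_m]\}$, and $k\ge 1$ an integer. Let $T$ be a small minimal $(G,\mathcal{F})$-tree and $(T_n)_{n\in\mathbb{N}}$ a sequence of $k$-tame $(G,\mathcal{F})$-trees converging to $T$ in the equivariant Gromov–Hausdorff topology. Then $T$ is $k$-tame. (That is, the set of $k$-tame trees is closed in the space of small minimal $(G,\mathcal{F})$-trees.)
   Context: Peripheral: conjugate into some $G_i$. $(G,\mathcal{F})$-tree: $\mathbb{R}$-tree with isometric $G$-action in which every peripheral subgroup fixes a unique point. Small: arc stabilizers trivial or cyclic non-peripheral; minimal: no proper nonempty invariant subtree. $\mathrm{Fix}(g)$ is the fixed point set of $g$. A small minimal $(G,\mathcal{F})$-tree is $k$-tame if for every non-peripheral $g\in G$ and every $l\ge1$, $\mathrm{Fix}(g^l)\subseteq\mathrm{Fix}(g^k)$. Convergence $T_n\to T$ in the equivariant Gromov–Hausdorff topology: for every finite $K\subset T$, finite $P\subset G$, $\epsilon>0$, for all large $n$ there exist finite $K_n\subset T_n$ and $R\subseteq K\times K_n$ with surjective projections such that $|d_T(gx,hy)-d_{T_n}(gx',hy')|<\epsilon$ for all $(x,x'),(y,y')\in R$ and $g,h\in P$. *)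

From Stdlib Require Import Reals List ZArith.
Open Scope R_scope.

Record Group := {
  gcar :> Type;
  gmul : gcar -> gcar -> gcar;
  gone : gcar;
  ginv : gcar -> gcar;
  gmulA : forall x y z, gmul x (gmul y z) = gmul (gmul x y) z;
  gmul1l : forall x, gmul gone x = x;
  gmul1r : forall x, gmul x gone = x;
  gmulVl : forall x, gmul (ginv x) x = gone;
  gmulVr : forall x, gmul x (ginv x) = gone }.

Arguments gmul {g}. Arguments gone {g}. Arguments ginv {g}.

Fixpoint gpow {G : Group} (g : G) (n : nat) : G :=
  match n with O => gone | S n' => gmul g (gpow g n') end.

Definition gzpow {G : Group} (g : G) (z : Z) : G :=
  match z with
  | Z0 => gone
  | Zpos p => gpow g (Pos.to_nat p)
  | Zneg p => gpow (ginv g) (Pos.to_nat p)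
  end.

Definition countable_group (G : Group) : Prop :=
  exists f : nat -> G, forall g : G, exists n, f n = g.

Definition is_subgroup {G : Group} (H : G -> Prop) : Prop :=
  H gone /\ (forall a b, H a -> H b -> H (gmul a b)) /\ (forall a, H a -> H (ginv a)).

(** * Internal free product G = H_0 * ... * H_{m-1} * F_N,
      F_N free on x_0, ..., x_{N-1}, via unique reduced normal forms. *)
Definition letter (G : Group) : Type := ((nat * G) + (nat * bool))%type.

Definition letter_valid {G : Group} (m N : nat) (Hs : nat -> G -> Prop)
  (l : letter G) : Prop :=
  match l with
  | inl (i, a) => (i < m)%nat /\ Hs i a /\ a <> gone
  | inr (j, _) => (j < N)%nat
  end.

Definition letter_eval {G : Group} (x : nat -> G) (l : letter G) : G :=
  match l with
  | inl (_, a) => a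
  | inr (j, true) => x j
  | inr (j, false) => ginv (x j)
  end.

Definition letters_adj_ok {G : Group} (l1 l2 : letter G) : Prop :=
  match l1, l2 with
  | inl (i, _), inl (i', _) => i <> i'
  | inr (j, b), inr (j', b') => ~ (j = j' /\ b <> b')
  | _, _ => True
  end.

Fixpoint adj_chain {G : Group} (w : list (letter G)) : Prop :=
  match w with
  | l1 :: ((l2 :: _) as t) => letters_adj_ok l1 l2 /\ adj_chain t
  | _ => True
  end.

Definition reduced_word {G : Group} (m N : nat) (Hs : nat -> G -> Prop)
  (w : list (letter G)) : Prop :=
  Forall (letter_valid m N Hs) w /\ adj_chain w.

Definition word_eval {G : Group} (x : nat -> G) (w : list (letter G)) : G :=
  fold_right (fun l acc => gmul (letter_eval x l) acc) gone w.

Definition is_free_product (G : Group) (m : nat) (Hs : nat -> G -> Prop)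
  (N : nat) (x : nat -> G) : Prop :=
  (forall i, (i < m)%nat -> is_subgroup (Hs i)) /\
  (forall g : G, exists! w, reduced_word m N Hs w /\ word_eval x w = g).

Definition peripheral {G : Group} (m : nat) (Hs : nat -> G -> Prop) (g : G) : Prop :=
  exists i h a, (i < m)%nat /\ Hs i a /\ g = gmul h (gmul a (ginv h)).

(** * R-trees with an isometric G-action
    (R-tree = nonempty geodesic 0-hyperbolic metric space) *)
Record RTreeAction (G : Group) := {
  tpt :> Type;
  td : tpt -> tpt -> R;
  tact : G -> tpt -> tpt;
  t_inhab : inhabited tpt;
  td_refl : forall x, td x x = 0;
  td_sep : forall x y, td x y = 0 -> x = y;
  td_sym : forall x y, td x y = td y x;
  td_tri : forall x y z, td x z <= td x y + td y z;
  t_geodesic : forall x y, exists f : R -> tpt,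
      f 0 = x /\ f (td x y) = y /\
      forall s t, 0 <= s <= td x y -> 0 <= t <= td x y ->
        td (f s) (f t) = Rabs (s - t);
  t_0hyp : forall x y z w,
      td x y + td z w <= Rmax (td x z + td y w) (td x w + td y z);
  tact_one : forall p, tact gone p = p;
  tact_mul : forall g h p, tact (gmul g h) p = tact g (tact h p);
  tact_isom : forall g p q, td (tact g p) (tact g q) = td p q }.

Arguments td {G r}. Arguments tact {G r}.

Section TreeDefs.
Context {G : Group} (m : nat) (Hs : nat -> G -> Prop).

Definition in_segment {T : RTreeAction G} (x y z : T) : Prop :=
  td x z + td z y = td x y.

Definition Fix {T : RTreeAction G} (g : G) : T -> Prop := fun p => tact g p = p.

Definition GF_tree (T : RTreeAction G) : Prop :=
  forall i h, (i < m)%nat ->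
    exists! p : T, forall a, Hs i a -> tact (gmul h (gmul a (ginv h))) p = p.

Definition arc_stab {T : RTreeAction G} (x y : T) (g : G) : Prop :=
  forall z, in_segment x y z -> tact g z = z.

Definition small_tree (T : RTreeAction G) : Prop :=
  forall x y : T, x <> y ->
    (forall g, arc_stab x y g <-> g = gone) \/
    (exists g, (forall h, arc_stab x y h <-> exists z : Z, h = gzpow g z)
               /\ ~ peripheral m Hs g).

Definition subtree {T : RTreeAction G} (S : T -> Prop) : Prop :=
  (exists p, S p) /\ forall x y z, S x -> S y -> in_segment x y z -> S z.

Definition minimal_tree (T : RTreeAction G) : Prop :=
  forall S : T -> Prop, subtree S -> (forall g p, S p -> S (tact g p)) ->
    forall p, S p.

Definition k_tame (k : nat) (T : RTreeAction G) : Prop :=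
  GF_tree T /\ small_tree T /\ minimal_tree T /\
  forall g : G, ~ peripheral m Hs g -> forall l : nat, (1 <= l)%nat ->
    forall p : T, Fix (gpow g l) p -> Fix (gpow g k) p.

End TreeDefs.

Definition eqGH_converges {G : Group} (Ts : nat -> RTreeAction G)
  (T : RTreeAction G) : Prop :=
  forall (K : list T) (P : list G) (eps : R), 0 < eps ->
  exists N0 : nat, forall n : nat, (N0 <= n)%nat ->
  exists (Kn : list (Ts n)) (Rel : T -> Ts n -> Prop),
    (forall p p', Rel p p' -> In p K /\ In p' Kn) /\
    (forall p, In p K -> exists p', Rel p p') /\
    (forall p', In p' Kn -> exists p, Rel p p') /\
    (forall p p' q q' g h, Rel p p' -> Rel q q' -> In g P -> In h P ->
       Rabs (td (tact g p) (tact h q) - td (tact g p') (tact h q')) < eps).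

(* In a k-tame tree the displacement of g^k at any point is at most k times
   the displacement of g^l, for every l >= 1.  Indeed, if g^(kl) is elliptic,
   a fixed point of g^(kl) halfway between q and g^(kl) q is fixed by g^k by
   tameness, so d(q, g^k q) <= d(q, g^(kl) q); if g^k is elliptic then so is
   g^(kl); and if g^k is hyperbolic its powers displace q at least as much as
   g^k does.  Finally d(q, g^(kl) q) <= k d(q, g^l q) by the triangle
   inequality.  This inequality involves finitely many distances, so it
   survives equivariant Gromov-Hausdorff limits; applied at a point fixed by
   g^l it forces the displacement of g^k to vanish. *)

From Stdlib Require Import Reals List ZArith Lra Lia.

Open Scope R_scope.

Section Powers.
Context {G : Group}.

Lemma gpow_add (c : G) a b : gpow c (a + b) = gmul (gpow c a) (gpow c b).
Proof.
  induction a as [|a IH]; simpl.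
  - now rewrite gmul1l.
  - now rewrite IH, gmulA.
Qed.

Lemma gpow_succ_r (c : G) n : gpow c (S n) = gmul (gpow c n) c.
Proof.
  rewrite <- Nat.add_1_r, gpow_add; simpl.
  now rewrite gmul1r.
Qed.

Lemma gpow_mul (c : G) a b : gpow (gpow c a) b = gpow c (a * b).
Proof.
  induction b as [|b IH]; simpl.
  - now rewrite Nat.mul_0_r.
  - now rewrite IH, Nat.mul_succ_r, Nat.add_comm, gpow_add.
Qed.

End Powers.

Section Displacement.
Context {G : Group} (T : RTreeAction G).

Lemma td_ge0 (x y : T) : 0 <= td x y.
Proof.
  pose proof (td_tri _ _ x y x) as Htri.
  rewrite td_refl, (td_sym _ _ y x) in Htri; lra.
Qed.

Lemma Fix_gpow (c : G) (p : T) n : Fix c p -> Fix (gpow c n) p.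
Proof.
  unfold Fix; intro Hp; induction n as [|n IH]; simpl.
  - apply tact_one.
  - now rewrite tact_mul, IH, Hp.
Qed.

Lemma td_gpow_le (c : G) (q : T) n :
  td q (tact (gpow c n) q) <= INR n * td q (tact c q).
Proof.
  induction n as [|n IH]; simpl gpow.
  - rewrite tact_one, td_refl; simpl; lra.
  - rewrite tact_mul, S_INR.
    pose proof (td_tri _ _ q (tact c q) (tact c (tact (gpow c n) q))) as Htri.
    rewrite tact_isom in Htri; lra.
Qed.

(* The hypothesis is the usual criterion for c to be elliptic. *)
Lemma fixed_midpoint (c : G) (q : T) :
  td q (tact c (tact c q)) <= td q (tact c q) ->
  exists p, Fix c p /\ 2 * td q p = td q (tact c q).
Proof.
  intro Hc2; set (D := td q (tact c q)) in *.
  assert (HD : 0 <= D) by apply td_ge0.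
  destruct (t_geodesic _ _ q (tact c q)) as [f [f0 [fD f_isom]]].
  fold D in fD, f_isom.
  set (p := f (D / 2)).
  assert (Hqp : td q p = D / 2).
  { unfold p; rewrite <- f0 at 1; rewrite f_isom by lra.
    rewrite Rabs_left1; lra. }
  assert (Hpcq : td p (tact c q) = D / 2).
  { unfold p; rewrite <- fD at 1; rewrite f_isom by lra.
    rewrite Rabs_left1; lra. }
  exists p; split; [|lra].
  (* The four-point condition on q, c q, c^2 q and c p puts c p on [q, c q]
     at distance D/2 from c q, i.e. at p. *)
  assert (Hcp_cq : td (tact c p) (tact c q) = D / 2)
    by (rewrite tact_isom, td_sym; lra).
  assert (Hcp_c2q : td (tact c p) (tact c (tact c q)) = D / 2)
    by (rewrite tact_isom; lra).
  assert (Hcq_c2q : td (tact c q) (tact c (tact c q)) = D)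
    by now rewrite tact_isom.
  pose proof (t_0hyp _ _ (tact c p) q (tact c q) (tact c (tact c q))) as H4.
  rewrite Hcp_cq, Hcp_c2q, Hcq_c2q in H4; fold D in H4.
  assert (Hcp_q : td (tact c p) q <= D / 2)
    by (unfold Rmax in H4; destruct Rle_dec; lra).
  pose proof (t_0hyp _ _ p (tact c p) (tact c q) q) as H4'.
  rewrite Hpcq, (td_sym _ _ p q), Hqp, (td_sym _ _ (tact c q) q), Hcp_cq in H4'.
  fold D in H4'.
  pose proof (td_ge0 p (tact c p)).
  symmetry; apply td_sep.
  unfold Rmax in H4'; destruct Rle_dec; lra.
Qed.

Lemma td_sq_le_of_Fix (c : G) (q p : T) :
  Fix c p -> td q (tact c (tact c q)) <= td q (tact c q).
Proof.
  unfold Fix; intro Hp.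
  assert (Hcq : td (tact c q) p = td q p) by (rewrite <- Hp at 1; apply tact_isom).
  assert (Hc2q : td (tact c (tact c q)) p = td q p)
    by (rewrite <- Hp at 1; rewrite tact_isom; exact Hcq).
  assert (Hc : td (tact c (tact c q)) (tact c q) = td q (tact c q))
    by now rewrite tact_isom, td_sym.
  pose proof (t_0hyp _ _ q (tact c (tact c q)) (tact c q) p) as H4.
  rewrite Hcq, Hc2q, Hc in H4.
  unfold Rmax in H4; destruct Rle_dec; lra.
Qed.

Lemma td_gpow_four_point (c : G) (q : T) n :
  2 * td q (tact (gpow c (S n)) q) <=
  Rmax (2 * td q (tact c q))
       (td q (tact (gpow c (S (S n))) q) + td q (tact (gpow c n) q)).
Proof.
  set (r := tact (gpow c (S n)) q).
  assert (Hcr : tact (gpow c (S (S n))) q = tact c r)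
    by (unfold r; simpl; now rewrite tact_mul).
  pose proof (t_0hyp _ _ q r (tact c q) (tact c r)) as H4.
  rewrite (tact_isom _ _ c q r) in H4.
  assert (Hr_cr : td r (tact c r) = td q (tact c q)).
  { unfold r; rewrite <- tact_mul.
    change (gmul c (gpow c (S n))) with (gpow c (S (S n))).
    now rewrite (gpow_succ_r c (S n)), tact_mul, tact_isom. }
  assert (Hr_cq : td r (tact c q) = td q (tact (gpow c n) q)).
  { unfold r; simpl gpow; now rewrite tact_mul, tact_isom, td_sym. }
  rewrite Hr_cr, Hr_cq, <- Hcr in H4.
  replace (2 * td q r) with (td q r + td q r) by ring.
  replace (2 * td q (tact c q)) with (td q (tact c q) + td q (tact c q)) by ring.
  exact H4.
Qed.

(* Hyperbolic case: the sequence n |-> d(q, c^n q) is convex, so once it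
   increases at n = 1 it never drops below d(q, c q) again. *)
Lemma td_gpow_ge_of_hyperbolic (c : G) (q : T) :
  td q (tact c (tact c q)) > td q (tact c q) ->
  forall n, (1 <= n)%nat -> td q (tact (gpow c n) q) >= td q (tact c q).
Proof.
  intro Hc2.
  set (u n := td q (tact (gpow c n) q)).
  set (D := td q (tact c q)) in *.
  assert (Hu1 : u 1%nat = D) by (unfold u; simpl; now rewrite tact_mul, tact_one).
  assert (Hu2 : u 2%nat = td q (tact c (tact c q)))
    by (unfold u; simpl; now rewrite !tact_mul, tact_one).
  set (a := td q (tact c (tact c q)) - D).
  assert (Hincr : forall n, u (S (S n)) - u (S n) >= a /\ u (S (S n)) > D).
  { induction n as [|n [IHa IHD]].
    - rewrite Hu1, Hu2; unfold a; lra.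
    - pose proof (td_gpow_four_point c q (S n)) as H4.
      change (2 * u (S (S n)) <= Rmax (2 * D) (u (S (S (S n))) + u (S n))) in H4.
      assert (u (S (S (S n))) + u (S n) >= 2 * u (S (S n)))
        by (unfold Rmax in H4; destruct Rle_dec; lra).
      assert (a > 0) by (unfold a; lra).
      lra. }
  intros [|[|n]] Hn; [lia| |].
  - change (u 1%nat >= D); lra.
  - destruct (Hincr n); change (u (S (S n)) >= D); lra.
Qed.

Section Tame.
Variables (g : G) (k : nat).
Hypothesis Htame :
  forall n, (1 <= n)%nat -> forall p : T, Fix (gpow g n) p -> Fix (gpow g k) p.

Lemma td_gpow_k_le_gpow_kl (q : T) l : (1 <= k)%nat -> (1 <= l)%nat ->
  td q (tact (gpow g k) q) <= td q (tact (gpow g (k * l)) q).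
Proof.
  intros Hk Hl.
  set (h := gpow g k).
  assert (HC : gpow h l = gpow g (k * l)) by apply gpow_mul.
  rewrite <- HC; set (C := gpow h l).
  destruct (Rle_lt_dec (td q (tact C (tact C q))) (td q (tact C q)))
    as [HC_ell | HC_hyp].
  - destruct (fixed_midpoint C q HC_ell) as [p [HpC Hqp]].
    assert (Hph : Fix h p) by (apply (Htame (k * l)); [nia | now rewrite <- HC]).
    pose proof (td_tri _ _ q p (tact h q)) as Htri.
    rewrite <- Hph in Htri at 2.
    rewrite tact_isom, (td_sym _ _ p q) in Htri; lra.
  - destruct (Rle_lt_dec (td q (tact h (tact h q))) (td q (tact h q)))
      as [Hh_ell | Hh_hyp].
    + destruct (fixed_midpoint h q Hh_ell) as [p [Hph _]].
      pose proof (td_sq_le_of_Fix C q p (Fix_gpow h p l Hph)); lra.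
    + pose proof (td_gpow_ge_of_hyperbolic h q Hh_hyp l Hl) as Hhyp.
      fold C in Hhyp; lra.
Qed.

Lemma td_gpow_k_le_of_tame (q : T) l : (1 <= k)%nat -> (1 <= l)%nat ->
  td (tact (gpow g k) q) q <= INR k * td (tact (gpow g l) q) q.
Proof.
  intros Hk Hl.
  rewrite (td_sym _ _ (tact (gpow g k) q)), (td_sym _ _ (tact (gpow g l) q)).
  pose proof (td_gpow_k_le_gpow_kl q l Hk Hl) as Hkl.
  rewrite (Nat.mul_comm k l), <- gpow_mul in Hkl.
  pose proof (td_gpow_le (gpow g l) q k); lra.
Qed.

End Tame.
End Displacement.

Lemma eqGH_approx_displacement {G : Group} (Ts : nat -> RTreeAction G)
  (T : RTreeAction G) (P : list G) (p : T) (eps : R) :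
  eqGH_converges Ts T -> 0 < eps ->
  exists n (p' : Ts n), forall g, In g P ->
    Rabs (td (tact g p) p - td (tact g p') p') < eps.
Proof.
  intros Hconv Heps.
  destruct (Hconv (p :: nil) (gone :: P) eps Heps) as [N0 HN].
  destruct (HN N0 (le_n _)) as [Kn [Rel [_ [HK [_ Hdist]]]]].
  destruct (HK p (or_introl eq_refl)) as [p' Hpp'].
  exists N0, p'; intros g Hg.
  pose proof (Hdist p p' p p' g gone Hpp' Hpp' (or_intror Hg) (or_introl eq_refl))
    as Hd.
  now rewrite !tact_one in Hd.
Qed.

Lemma td_gpow_k_le_of_eqGH_limit {G : Group} (Ts : nat -> RTreeAction G)
  (T : RTreeAction G) (g : G) (k l : nat) (p : T) :
  eqGH_converges Ts T -> (1 <= k)%nat -> (1 <= l)%nat ->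
  (forall n j, (1 <= j)%nat -> forall q : Ts n, Fix (gpow g j) q -> Fix (gpow g k) q) ->
  td (tact (gpow g k) p) p <= INR k * td (tact (gpow g l) p) p.
Proof.
  intros Hconv Hk Hl Htame.
  assert (Hk1 : 1 <= INR k) by (apply (le_INR 1); exact Hk).
  apply le_epsilon; intros eps Heps.
  set (eta := eps / (INR k + 1)).
  assert (Heta : eta * (INR k + 1) = eps) by (unfold eta; field; lra).
  destruct (eqGH_approx_displacement Ts T (gpow g l :: gpow g k :: nil) p eta Hconv)
    as [n [p' Happrox]]; [unfold eta; apply Rdiv_lt_0_compat; lra |].
  pose proof (Happrox (gpow g l) (or_introl eq_refl)) as Hl_approx.
  pose proof (Happrox (gpow g k) (or_intror (or_introl eq_refl))) as Hk_approx.
  apply Rabs_def2 in Hl_approx; apply Rabs_def2 in Hk_approx.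
  pose proof (td_gpow_k_le_of_tame (Ts n) g k (Htame n) p' l Hk Hl) as Hbound.
  assert (INR k * td (tact (gpow g l) p') p' <=
          INR k * (td (tact (gpow g l) p) p + eta))
    by (apply Rmult_le_compat_l; lra).
  nra.
Qed.

Theorem proposition6p4 :
  forall (G : Group) (m : nat) (Hs : nat -> G -> Prop) (N : nat) (x : nat -> G)
         (k : nat),
    countable_group G ->
    is_free_product G m Hs N x ->
    (1 <= k)%nat ->
    forall (T : RTreeAction G) (Ts : nat -> RTreeAction G),
      GF_tree m Hs T -> small_tree m Hs T -> minimal_tree T ->
      (forall n, k_tame m Hs k (Ts n)) ->
      eqGH_converges Ts T ->
      k_tame m Hs k T.
Proof.
  intros G m Hs N x k _ _ Hk T Ts HGF Hsmall Hmin Htame Hconv.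
  split; [exact HGF | split; [exact Hsmall | split; [exact Hmin |]]].
  intros g Hg l Hl p Hp; apply td_sep, Rle_antisym; [| apply td_ge0].
  assert (Htame_g : forall n j, (1 <= j)%nat -> forall q : Ts n,
                      Fix (gpow g j) q -> Fix (gpow g k) q)
    by (intros n; destruct (Htame n) as [_ [_ [_ Htame_n]]]; exact (Htame_n g Hg)).
  pose proof (td_gpow_k_le_of_eqGH_limit Ts T g k l p Hconv Hk Hl Htame_g) as Hlim.
  unfold Fix in Hp; rewrite Hp, td_refl, Rmult_0_r in Hlim.
  exact Hlim.
Qed.
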